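(* Every ordered graph $F$ on $k$ vertices that does not contain a monotone path of length two is an ordered subgraph of $H_k$.
   Context: An ordered graph is a graph with a totally ordered vertex set. A monotone path of length two in $F$ consists of vertices $u<v<w$ with $uv,vw\in E(F)$. $H_k$ is the ordered graph with vertex set $[k]\times\{0,1\}$, ordered lexicographically ($(a,i)<(b,j)$ iff $a<b$, or $a=b$ and $i<j$), and edge set $\{(x,0)(y,1): x\le y\}$. $F$ is an ordered subgraph of $H$ if there is an injective order-preserving map $V(F)\to V(H)$ sending edges of $F$ to edges of $H$. *)

From mathcomp Require Import all_boot.
Set Implicit Arguments. Unset Strict Implicit. Unset Printing Implicit Defensive.

Definition simple_graph (k : nat) (e : rel 'I_k) : Prop :=
  irreflexive e /\ symmetric e.

Definition has_monotone_P2 (k : nat) (e : rel 'I_k) : Prop :=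
  exists u v w : 'I_k, [/\ u < v, v < w, e u v & e v w].

(* Vertex set of H_k : [k] x {0,1}, with 0 = false, 1 = true;
   first coordinate a : 'I_k stands for a+1 in [k]. *)
Definition Hvert (k : nat) := ('I_k * bool)%type.

Definition Hlt (k : nat) (p q : Hvert k) : bool :=
  (p.1 < q.1) || ((p.1 == q.1) && ~~ p.2 && q.2).

Definition Hedge (k : nat) (p q : Hvert k) : bool :=
  (~~ p.2 && q.2 && (p.1 <= q.1)) || (~~ q.2 && p.2 && (q.1 <= p.1)).

Definition ordered_subgraph_of_H (m k : nat) (e : rel 'I_m) : Prop :=
  exists f : 'I_m -> Hvert k,
    [/\ injective f,
        (forall x y : 'I_m, x < y -> Hlt (f x) (f y)) &
        (forall x y : 'I_m, e x y -> Hedge (f x) (f y))].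

From mathcomp Require Import all_boot.

Set Implicit Arguments.
Unset Strict Implicit.
Unset Printing Implicit Defensive.

(* Send v to (v, 1) if v has a neighbour to its left and to (v, 0) otherwise.
   For an edge u < v the vertex v gets label 1, and u gets label 0 because a
   left neighbour of u would give a monotone path through u and v; hence the
   edge becomes (u, 0)(v, 1) with u <= v, an edge of H_k. *)

Lemma Hlt_pair (k : nat) (x y : 'I_k) (a b : bool) : x < y -> Hlt (x, a) (y, b).
Proof. by move=> xy; rewrite /Hlt /= xy. Qed.

Lemma Hedge_sym (k : nat) : symmetric (@Hedge k).
Proof. by move=> p q; rewrite /Hedge orbC. Qed.

Lemma Hedge_lr (k : nat) (x y : 'I_k) : x <= y -> Hedge (x, false) (y, true).
Proof. by rewrite /Hedge /= => ->. Qed.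

Section LeftNeighbourLabelling.

Variables (k : nat) (e : rel 'I_k).

Definition has_left_nbr (v : 'I_k) : bool := [exists u : 'I_k, (u < v) && e u v].

Definition left_nbr_label (v : 'I_k) : Hvert k := (v, has_left_nbr v).

Lemma has_left_nbr_edge (u v : 'I_k) : u < v -> e u v -> has_left_nbr v.
Proof. by move=> uv euv; apply/existsP; exists u; rewrite uv euv. Qed.

Lemma no_left_nbr_edge (u v : 'I_k) :
  ~ has_monotone_P2 e -> u < v -> e u v -> ~~ has_left_nbr u.
Proof.
move=> noP2 uv euv; apply/existsP => -[w /andP[wu ewu]].
by apply: noP2; exists w, u, v.
Qed.

Lemma left_nbr_label_inj : injective left_nbr_label.
Proof. by move=> x y []. Qed.

Lemma left_nbr_label_edge_lt (u v : 'I_k) :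
  ~ has_monotone_P2 e -> u < v -> e u v ->
  Hedge (left_nbr_label u) (left_nbr_label v).
Proof.
move=> noP2 uv euv; rewrite /left_nbr_label (has_left_nbr_edge uv euv).
by rewrite (negbTE (no_left_nbr_edge noP2 uv euv)) Hedge_lr // ltnW.
Qed.

End LeftNeighbourLabelling.

Theorem lemma4p1 (k : nat) (e : rel 'I_k) :
  simple_graph e -> ~ has_monotone_P2 e -> ordered_subgraph_of_H k e.
Proof.
move=> [irr sym] noP2; exists (left_nbr_label e); split.
- exact: left_nbr_label_inj.
- by move=> x y; apply: Hlt_pair.
- move=> x y exy; case: (ltngtP x y) => [xy|yx|/val_inj xy].
  + exact: left_nbr_label_edge_lt.
  + by rewrite Hedge_sym; apply: left_nbr_label_edge_lt; rewrite // sym.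
  + by rewrite xy irr in exy.
Qed.
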